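(* Let $A$ be a finitely generated free abelian group of rank $r$ and $M$ a finitely generated $\mathbb{Z}A$-module. Assume that for each subgroup $B\subset A$ with $\mathrm{rank}(B)<r$ there exist a positive integer $k$ and elements $a_1,\dots,a_k\in A\setminus B$ such that the product $(e_{a_1}-1)\cdots(e_{a_k}-1)$ annihilates $M$. Then $M$ is finitely generated as an abelian group.
   Context: $A$ is written additively; for $a\in A$, $e_a$ denotes the corresponding basis element of the group ring $\mathbb{Z}A$ (so $e_ae_b=e_{a+b}$ and $\mathbb{Z}A$ is a Laurent polynomial ring in $r$ variables). *)

From mathcomp Require Import all_boot all_order all_algebra.
Set Implicit Arguments. Unset Strict Implicit. Unset Printing Implicit Defensive.
Import Order.TTheory GRing.Theory Num.Theory.
Local Open Scope ring_scope.

(* A ZA-module is an abelian group M together with an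
   action of A by additive maps (e_a acts as act a, extended Z-linearly). *)
Notation grp r := 'rV[int]_r.

Definition is_ZA_action (r : nat) (M : zmodType) (act : grp r -> M -> M) : Prop :=
  [/\ forall a (x y : M), act a (x + y) = act a x + act a y,
      forall x : M, act 0 x = x &
      forall a b (x : M), act (a + b) x = act a (act b x)].

Definition fg_ZA_module (r : nat) (M : zmodType) (act : grp r -> M -> M) : Prop :=
  exists gens : seq M, forall m : M,
    exists s : seq (int * grp r * M),
      all (fun t => t.2 \in gens) s /\
      m = \sum_(t <- s) (act t.1.2 t.2) *~ t.1.1.

Definition fg_abelian (M : zmodType) : Prop :=
  exists n (g : 'I_n -> M), forall m : M,
    exists c : 'I_n -> int, m = \sum_(i < n) g i *~ c i.

Definition is_subgroup (r : nat) (B : pred (grp r)) : Prop :=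
  0 \in B /\ forall a b, a \in B -> b \in B -> a - b \in B.

(* rank(B) < k: every finite family of elements of B has fewer than k
   linearly independent members (rank = maximal number of linearly
   independent elements, computed over Q). *)
Definition subgroup_rank_lt (r : nat) (B : pred (grp r)) (k : nat) : Prop :=
  forall (n : nat) (v : 'M[int]_(n, r)),
    (forall i, row i v \in B) ->
    (\rank (map_mx (fun z : int => z%:~R : rat) v) < k)%N.

Definition prod_act (r : nat) (M : zmodType) (act : grp r -> M -> M)
    (as_ : seq (grp r)) (x : M) : M :=
  foldr (fun a y => act a y - y) x as_.

From mathcomp Require Import all_boot all_order all_algebra.
Import Order.TTheory GRing.Theory Num.Theory.
Set Implicit Arguments. Unset Strict Implicit. Unset Printing Implicit Defensive.
Local Open Scope ring_scope.

(* Call a family c_1, ..., c_s of elements of A forcing if, whenever the c_i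
   act trivially modulo a submodule Q on N = Q + ZA.G (G finite), N/Q is a
   finitely generated abelian group.  A family of r independent elements is
   forcing: it spans a sublattice of finite index, so A acts on N/Q through a
   finite quotient and the finitely many translates of G generate N/Q.
   A family of s < r independent elements spans rationally a subgroup B of rank
   < r, so some (e_{a_1} - 1)...(e_{a_k} - 1) with a_j outside B kills M.
   Adjoining a_1 gives an independent family of size s + 1, forcing by
   induction, and a_1 acts trivially on N modulo Q + ZA.(e_{a_1} - 1)G; so N
   is finitely generated over Q + ZA.(e_{a_1} - 1)G, and peeling off the k
   factors in turn reaches Q + ZA.0 = Q.  The empty family and Q = 0 give the
   theorem. *)

Local Notation toQ := (map_mx (fun z : int => z%:~R : rat)).

Section AdditiveSpan.
Variable V : zmodType.

Definition zclosed (S : V -> Prop) :=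
  [/\ S 0, forall x y, S x -> S y -> S (x + y) & forall x, S x -> S (- x)].

Inductive zspan (S : V -> Prop) : V -> Prop :=
| zspan_mem x : S x -> zspan S x
| zspan0 : zspan S 0
| zspanD x y : zspan S x -> zspan S y -> zspan S (x + y)
| zspanN x : zspan S x -> zspan S (- x).

Lemma zspan_zclosed S : zclosed (zspan S).
Proof. by split; [exact: zspan0 | exact: zspanD | exact: zspanN]. Qed.

Lemma zspan_min (S R : V -> Prop) :
  zclosed R -> (forall x, S x -> R x) -> forall x, zspan S x -> R x.
Proof. by case=> R0 RD RN SR x; elim=> //; auto. Qed.

Lemma zclosedB S x y : zclosed S -> S x -> S y -> S (x - y).
Proof. by case=> _ SD SN Sx Sy; apply: SD (SN _ Sy). Qed.

Lemma zclosedMz S x n : zclosed S -> S x -> S (x *~ n).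
Proof.
case=> S0 SD SN Sx.
have Sn k : S (x *+ k) by elim: k => [|k IH]; rewrite ?mulr0n // mulrS; apply: SD.
by case: n => n; rewrite ?NegzE ?mulrNz; [apply: Sn | apply/SN/Sn].
Qed.

Lemma zclosed_sum (I : eqType) (s : seq I) (F : I -> V) S :
  zclosed S -> (forall i, i \in s -> S (F i)) -> S (\sum_(i <- s) F i).
Proof. by case=> S0 SD _ SF; rewrite big_seq; apply: big_rec => // i x /SF; apply: SD. Qed.

Lemma zspan_seq_coef (hs : seq V) x :
  zspan (fun y => y = 0 \/ y \in hs) x ->
  exists c : 'I_(size hs) -> int, x = \sum_(i < size hs) hs`_i *~ c i.
Proof.
have coef0 : exists c : 'I_(size hs) -> int, 0 = \sum_(i < size hs) hs`_i *~ c i.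
  by exists (fun=> 0); rewrite big1.
move: x; apply: zspan_min => [|y [->|yhs] //].
  split=> // [y z [c1 ->] [c2 ->] | y [c ->]].
    exists (fun i => c1 i + c2 i); rewrite -big_split.
    by apply: eq_bigr => i _; rewrite mulrzDr.
  by exists (fun i => - c i); rewrite -sumrN; apply: eq_bigr => i _; rewrite mulrNz.
have yi : (index y hs < size hs)%N by rewrite index_mem.
exists (fun i => (i == Ordinal yi)%:R); rewrite (bigD1 (Ordinal yi)) //= eqxx.
by rewrite mulr1z nth_index // big1 ?addr0 // => i /negbTE ->.
Qed.

Definition fg_over (P Q : V -> Prop) :=
  exists hs : seq V, forall x, P x -> zspan (fun y => Q y \/ y \in hs) x.

Lemma fg_over_sub (P Q : V -> Prop) : (forall x, P x -> Q x) -> fg_over P Q.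
Proof. by move=> PQ; exists [::] => x /PQ Qx; apply: zspan_mem; left. Qed.

Lemma fg_overS (P1 P2 Q : V -> Prop) :
  (forall x, P1 x -> P2 x) -> fg_over P2 Q -> fg_over P1 Q.
Proof. by move=> P12 [hs P2hs]; exists hs => x /P12 /P2hs. Qed.

Lemma fg_over_trans (P R Q : V -> Prop) : fg_over P R -> fg_over R Q -> fg_over P Q.
Proof.
case=> hs1 PR [hs2 RQ]; exists (hs1 ++ hs2) => x /PR.
apply: zspan_min => [|y [/RQ|yhs1]]; first exact: zspan_zclosed.
  apply: zspan_min => [|z [Qz|zhs2]]; first exact: zspan_zclosed.
    by apply: zspan_mem; left.
  by apply: zspan_mem; right; rewrite mem_cat zhs2 orbT.
by apply: zspan_mem; right; rewrite mem_cat yhs1.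
Qed.

End AdditiveSpan.

Section IntegerLattices.
Variable n : nat.

Lemma zclosed_mulmx s (T : 'rV[int]_n -> Prop) (cs : 'M[int]_(s, n)) :
  zclosed T -> (forall i, T (row i cs)) -> forall u, T (u *m cs).
Proof.
move=> Tz Tcs u; rewrite mulmx_sum_row; apply: zclosed_sum => // i _.
by rewrite -[u 0 i]intz scaler_int; apply: zclosedMz.
Qed.

Lemma lattice_coset_reps (cs : 'M[int]_n) : \det cs != 0 ->
  exists reps : seq 'rV[int]_n,
    forall a, exists2 v, v \in reps & exists u, a = u *m cs + v.
Proof.
set D := \det cs => D_neq0; pose N := `|D|%N.
pose red (a : 'rV[int]_n) := \row_j ((a ord0 j) %% D)%Z.
have red_lt (a : 'rV[int]_n) (j : 'I_n) : (`|(a ord0 j %% D)%Z|%N < N)%N.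
  by rewrite -ltz_nat !abszE ger0_norm ?modz_ge0 // ltz_mod.
exists [seq \row_j ((f j : nat)%:Z) | f : {ffun 'I_n -> 'I_N} <- enum {ffun 'I_n -> 'I_N}].
move=> a; exists (red a).
  apply/mapP; exists [ffun j => Ordinal (red_lt a j)]; first by rewrite mem_enum.
  by apply/rowP => j; rewrite !mxE ffunE /= abszE ger0_norm // modz_ge0.
exists (\row_j ((a ord0 j) %/ D)%Z *m \adj cs).
rewrite -mulmxA mul_adj_mx mul_mx_scalar; apply/rowP => j.
by rewrite !mxE {1}(divz_eq (a ord0 j) D) mulrC.
Qed.

Lemma row_free_det (cs : 'M[int]_n) : row_free (toQ cs) -> \det cs != 0.
Proof. by rewrite row_free_unit unitmxE unitfE det_map_mx intr_eq0. Qed.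

Definition qspan s (cs : 'M[int]_(s, n)) : pred 'rV[int]_n :=
  fun a => (toQ a <= toQ cs)%MS.

Lemma qspan_subgroup s (cs : 'M[int]_(s, n)) : is_subgroup (qspan cs).
Proof.
split=> [|a b]; rewrite !unfold_in /qspan ?map_mx0 ?sub0mx // => Ba Bb.
by rewrite map_mxB addmx_sub // -scaleN1r scalemx_sub.
Qed.

Lemma qspan_rank_lt s (cs : 'M[int]_(s, n)) k :
  (\rank (toQ cs) < k)%N -> subgroup_rank_lt (qspan cs) k.
Proof.
move=> rk_lt m v v_in; apply: leq_ltn_trans rk_lt; apply: mxrankS.
by apply/row_subP => i; rewrite -map_row; move: (v_in i); rewrite unfold_in.
Qed.

Lemma row_free_col_mx s a (cs : 'M[int]_(s, n)) :
  row_free (toQ cs) -> a \notin qspan cs -> row_free (toQ (col_mx a cs)).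
Proof.
rewrite /row_free unfold_in /qspan map_col_mx -(addsmxE (toQ a) (toQ cs)).1.
move=> /eqP rk_cs a_out; rewrite eqn_leq; apply/andP; split.
  apply: leq_trans (mxrank_adds_leqif _ _).1 _.
  by rewrite rk_cs leq_add2r rank_leq_row.
have := mxrank_leqif_sup (addsmxSr (toQ a) (toQ cs)).
by rewrite rk_cs add1n => /ltn_leqif ->; rewrite addsmx_sub negb_and a_out.
Qed.

End IntegerLattices.

Lemma forall_row_col_mx (R : Type) n s (T : 'rV[R]_n -> Prop) (a : 'rV[R]_n)
    (cs : 'M[R]_(s, n)) :
  T a -> (forall i, T (row i cs)) -> forall i, T (row i (col_mx a cs)).
Proof.
move=> Ta Tcs i; rewrite -(splitK i); case: (split i) => j /=.
  by rewrite rowKu (ord1 j) [row 0 a]row_id.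
by rewrite rowKd.
Qed.

Section ZAModule.
Variables (r : nat) (M : zmodType) (act : 'rV[int]_r -> M -> M).
Hypothesis act_ZA : is_ZA_action act.

Lemma actDr a x y : act a (x + y) = act a x + act a y.
Proof. by case: act_ZA. Qed.

Lemma act0l x : act 0 x = x.
Proof. by case: act_ZA. Qed.

Lemma actDl a b x : act (a + b) x = act a (act b x).
Proof. by case: act_ZA. Qed.

Lemma act0r a : act a 0 = 0.
Proof. by apply: (@addrI _ (act a 0)); rewrite -actDr !addr0. Qed.

Lemma actNr a x : act a (- x) = - act a x.
Proof. by apply/eqP; rewrite -subr_eq0 opprK -actDr addNr act0r. Qed.

Lemma actBr a x y : act a (x - y) = act a x - act a y.
Proof. by rewrite actDr actNr. Qed.

Lemma actC a b x : act a (act b x) = act b (act a x).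
Proof. by rewrite -!actDl addrC. Qed.

Definition submod (S : M -> Prop) := zclosed S /\ forall a x, S x -> S (act a x).

Definition mspan (S : M -> Prop) : M -> Prop :=
  zspan (fun y => exists a x, S x /\ y = act a x).

Lemma mspan_submod S : submod (mspan S).
Proof.
split=> [|a]; first exact: zspan_zclosed.
apply: zspan_min => [|_ [b [x [Sx ->]]]].
  split=> [|x y|x]; rewrite /= ?act0r ?actDr ?actNr;
    [exact: zspan0 | exact: zspanD | exact: zspanN].
by rewrite -actDl; apply: zspan_mem; exists (a + b), x.
Qed.

Lemma mspan_min (S R : M -> Prop) :
  submod R -> (forall x, S x -> R x) -> forall x, mspan S x -> R x.
Proof. by case=> Rz RA SR; apply: zspan_min => // _ [a [x [/SR Rx ->]]]; apply: RA. Qed.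

Definition genmod (Q : M -> Prop) (G : seq M) := mspan (fun x => Q x \/ x \in G).

Lemma genmod_submod Q G : submod (genmod Q G).
Proof. exact: mspan_submod. Qed.

Lemma genmod_memQ Q G x : Q x -> genmod Q G x.
Proof. by move=> Qx; apply: zspan_mem; exists 0, x; rewrite act0l; split; first left. Qed.

Lemma genmod_memG Q G x : x \in G -> genmod Q G x.
Proof. by move=> Gx; apply: zspan_mem; exists 0, x; rewrite act0l; split; first right. Qed.

Lemma genmod_min Q G (R : M -> Prop) : submod R -> (forall x, Q x -> R x) ->
  (forall x, x \in G -> R x) -> forall x, genmod Q G x -> R x.
Proof. by move=> Rsub QR GR; apply: mspan_min => // x []; [apply: QR | apply: GR]. Qed.

Definition acts_trivially (P Q : M -> Prop) (c : 'rV[int]_r) :=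
  forall p, P p -> Q (act c p - p).

Lemma acts_trivially_zclosed P Q : submod P -> zclosed Q -> zclosed (acts_trivially P Q).
Proof.
case=> _ PA [Q0 QD QN]; split=> [p _ | c1 c2 T1 T2 p Pp | c T p Pp].
- by rewrite act0l subrr.
- by rewrite actDl -[X in X - _](subrK (act c2 p)) -addrA; apply/QD/T2/Pp/T1/PA.
by rewrite -{2}[p]act0l -(subrr c) actDl -opprB; apply/QN/T/PA.
Qed.

Lemma acts_trivially_genmod Q G a : submod Q ->
  (forall g, g \in G -> Q (act a g - g)) -> acts_trivially (genmod Q G) Q a.
Proof.
move=> Qsub GQ; have [[Q0 QD QN] QA] := Qsub.
apply: genmod_min => // [|x Qx]; last by apply: zclosedB => //; apply: QA.
split=> [|b x]; last by rewrite /= actC -actBr; apply: QA.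
split=> [|x y|x] /=; first by rewrite act0r subrr.
  by rewrite actDr opprD addrACA; apply: QD.
by rewrite actNr -opprD; apply: QN.
Qed.

Definition fg_forcing s (cs : 'M[int]_(s, r)) :=
  forall Q G, submod Q -> (forall i, acts_trivially (genmod Q G) Q (row i cs)) ->
    fg_over (genmod Q G) Q.

Lemma fg_forcing_det (cs : 'M[int]_r) : \det cs != 0 -> fg_forcing cs.
Proof.
move=> det_neq0 Q G Qsub cs_triv; have [Qz QA] := Qsub.
have [reps reps_cover] := lattice_coset_reps det_neq0.
have lattice_triv :=
  zclosed_mulmx (acts_trivially_zclosed (genmod_submod Q G) Qz) cs_triv.
exists [seq act v g | v <- reps, g <- G].
apply: zspan_min => [|_ [b [x [[Qx|Gx] ->]]]]; first exact: zspan_zclosed.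
  by apply: zspan_mem; left; apply: QA.
have [v v_rep [u ->]] := reps_cover b.
have vx_gen : genmod Q G (act v x) by apply: (genmod_submod Q G).2; apply: genmod_memG.
rewrite actDl -[X in zspan _ X](subrK (act v x)).
apply: zspanD; apply: zspan_mem; first by left; apply: lattice_triv.
by right; apply: allpairs_f.
Qed.

Lemma fg_over_genmod_shift s (cs : 'M[int]_(s, r)) a Q G :
  fg_forcing (col_mx a cs) -> submod Q ->
  (forall i, acts_trivially (genmod Q G) Q (row i cs)) ->
  fg_over (genmod Q G) (genmod Q [seq act a g - g | g <- G]).
Proof.
move=> a_cs_forcing Qsub cs_triv; set Q' := genmod Q [seq act a g - g | g <- G].
have Q'sub : submod Q' := genmod_submod _ _.
have QQ' x : Q x -> Q' x := @genmod_memQ _ _ x.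
have genQG := genmod_submod Q G.
have genmodQ'G : forall x, genmod Q' G x -> genmod Q G x.
  apply: genmod_min => [//||x]; last exact: genmod_memG.
  apply: genmod_min => [//|x' /genmod_memQ //|_ /mapP[g Gg ->]].
  by apply: zclosedB (genQG.1) _ _; [apply: genQG.2 | ]; apply: genmod_memG.
apply: (@fg_overS _ _ (genmod Q' G)).
  apply: genmod_min => [|x /QQ'|x];
    [exact: genmod_submod | exact: genmod_memQ | exact: genmod_memG].
apply: a_cs_forcing => //.
apply: forall_row_col_mx => [|i p /genmodQ'G /cs_triv /QQ' //].
by apply: acts_trivially_genmod => // g Gg; apply/genmod_memG/map_f.
Qed.

Lemma prod_act_submod (P : M -> Prop) l x : submod P -> P x -> P (prod_act act l x).
Proof.
case=> Pz PA Px; elim: l => [|a l IHl] //=.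
by apply: zclosedB => //; apply: PA.
Qed.

Lemma fg_over_genmod_prod_act s (cs : 'M[int]_(s, r)) (l : seq 'rV[int]_r) Q G :
  (forall a, a \in l -> fg_forcing (col_mx a cs)) -> submod Q ->
  (forall i, acts_trivially (genmod Q G) Q (row i cs)) ->
  fg_over (genmod Q G) (genmod Q [seq prod_act act l g | g <- G]).
Proof.
elim: l => [_ _ _ | a l IHl l_forcing Qsub cs_triv].
  by apply: fg_over_sub => x; rewrite map_id.
have genQG := genmod_submod Q G.
have l_sub : forall x, genmod Q [seq prod_act act l g | g <- G] x -> genmod Q G x.
  apply: genmod_min => [//|x /genmod_memQ //|_ /mapP[g Gg ->]].
  by apply: prod_act_submod => //; apply: genmod_memG.
apply: fg_over_trans (IHl _ Qsub cs_triv) _ => [b bl|].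
  by apply: l_forcing; rewrite inE bl orbT.
have -> : [seq prod_act act (a :: l) g | g <- G] =
          [seq act a y - y | y <- [seq prod_act act l g | g <- G]] by rewrite -map_comp.
apply: fg_over_genmod_shift => [|//|i p /l_sub /cs_triv //].
by apply: l_forcing; rewrite inE eqxx.
Qed.

Section Annihilation.

Hypothesis annihilated : forall B : pred 'rV[int]_r,
  is_subgroup B -> subgroup_rank_lt B r ->
  exists as_ : seq 'rV[int]_r,
    (0 < size as_)%N /\ all (fun a => a \notin B) as_ /\
    forall x : M, prod_act act as_ x = 0.

Lemma fg_forcing_row_free d : forall s (cs : 'M[int]_(s, r)),
  (s + d)%N = r -> row_free (toQ cs) -> fg_forcing cs.
Proof.
elim: d => [|d IHd] s cs.
  by rewrite addn0 => s_r; subst s => /row_free_det/fg_forcing_det.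
move=> sd_r cs_free Q G Qsub cs_triv.
have rk_lt : (\rank (toQ cs) < r)%N.
  by move/eqP: cs_free ->; rewrite -sd_r addnS ltnS leq_addr.
have [as_ [_ [/allP as_out as_ann]]] :=
  annihilated (qspan_subgroup cs) (qspan_rank_lt rk_lt).
apply: fg_over_trans (fg_over_genmod_prod_act (l := as_) _ Qsub cs_triv) _.
  move=> a /as_out a_out; apply: IHd (row_free_col_mx cs_free a_out).
  by rewrite add1n addSnnS.
apply: fg_over_sub; apply: genmod_min => [|//|_ /mapP[g _ ->]]; first exact: Qsub.
by rewrite as_ann; case: Qsub => -[].
Qed.

End Annihilation.

End ZAModule.

Unset Implicit Arguments.

Theorem theoremD (r : nat) (M : zmodType) (act : 'rV[int]_r -> M -> M) :
  is_ZA_action act ->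
  fg_ZA_module act ->
  (forall B : pred 'rV[int]_r,
      is_subgroup B -> subgroup_rank_lt B r ->
      exists as_ : seq 'rV[int]_r,
        (0 < size as_)%N /\ all (fun a => a \notin B) as_ /\
        forall x : M, prod_act act as_ x = 0) ->
  fg_abelian M.
Proof.
move=> act_ZA [gens gens_span] annihilated.
have zero_submod : submod act (fun x : M => x = 0).
  split=> [|a x ->]; last exact: act0r.
  by split=> [|x y -> ->|x ->]; rewrite ?addr0 ?oppr0.
have no_rows_free : row_free (toQ (0 : 'M[int]_(0, r))).
  by rewrite /row_free -leqn0 rank_leq_row.
have [hs M_fg] : fg_over (genmod act (fun x => x = 0) gens) (fun x => x = 0).
  by apply: (fg_forcing_row_free act_ZA annihilated (add0n r) no_rows_free) => // -[].
exists (size hs), (fun i => hs`_i) => m; apply: zspan_seq_coef; apply: M_fg.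
have [genz genA] := genmod_submod act_ZA (fun x => x = 0) gens.
have [s [/allP s_gens ->]] := gens_span m.
apply: zclosed_sum => // t /s_gens t_gen.
by apply: zclosedMz => //; apply: genA; apply: genmod_memG.
Qed.
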